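(* Let $\mathcal F=(F,\rightarrowtail)$ be an argumentation framework with grounded extension $\mathcal G$. If $A\subseteq F$ is weakly complete, then $\mathcal G\subseteq A$.
   Context: An argumentation framework $\mathcal F=(F,\rightarrowtail)$ consists of a (possibly infinite) set $F$ of arguments and an attack relation $\rightarrowtail\subseteq F\times F$. A set $S$ defends an argument $a$ if every attacker of $a$ is attacked by some element of $S$. Grounded extension: $\mathcal G_0=\emptyset$, $\mathcal G_{\alpha+1}=\{a\in F:\mathcal G_\alpha\text{ defends }a\}$, $\mathcal G_\lambda=\bigcup_{\alpha<\lambda}\mathcal G_\alpha$ for limit $\lambda$; the grounded extension $\mathcal G$ is the value at which this ordinal-indexed sequence stabilizes. A weakly complete labeling is a map $L:F\to\{\mathtt{in},\mathtt{out},\mathtt{undec}\}$ such that for every $a\in F$: if $L(a)=\mathtt{in}$ then no attacker of $a$ is labeled $\mathtt{in}$; if $L(a)=\mathtt{out}$ then some attacker of $a$ is labeled $\mathtt{in}$; if $L(a)=\mathtt{undec}$ then some attacker of $a$ is labeled $\mathtt{undec}$ and no attacker of $a$ is labeled $\mathtt{in}$. A set $A$ is weakly complete if $A=\{a:L(a)=\mathtt{in}\}$ for some weakly complete labeling $L$. *)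

(* An argumentation framework: a type F of arguments and an
   attack relation [att b a] meaning "b attacks a". *)

Inductive label := lin | lout | lundec.

Definition defends {F : Type} (att : F -> F -> Prop) (S : F -> Prop) (a : F) : Prop :=
  forall b, att b a -> exists c, S c /\ att c b.

(* The grounded extension: the union of the transfinite (ordinal-indexed)
   iteration G_0 = empty, G_{α+1} = {a | G_α defends a}, unions at limits.
   This is rendered as the inductive (least) predicate generated by the rule
   "if the (already constructed) grounded arguments defend a, then a is
   grounded"; the stages of the induction are exactly the ordinal stages. *)
Inductive grounded {F : Type} (att : F -> F -> Prop) : F -> Prop :=
  | grounded_step : forall a,
      (forall b, att b a -> exists c, grounded att c /\ att c b) ->
      grounded att a.

Definition weakly_complete_labeling {F : Type} (att : F -> F -> Prop)
  (L : F -> label) : Prop :=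
  forall a,
    (L a = lin -> forall b, att b a -> L b <> lin) /\
    (L a = lout -> exists b, att b a /\ L b = lin) /\
    (L a = lundec -> (exists b, att b a /\ L b = lundec) /\
                     (forall b, att b a -> L b <> lin)).

Definition weakly_complete {F : Type} (att : F -> F -> Prop) (A : F -> Prop) : Prop :=
  exists L, weakly_complete_labeling att L /\ forall a, A a <-> L a = lin.


(* A weakly complete labeling labels every argument defended by [in]-arguments
   [in]: each attacker of such an argument is attacked by an [in]-argument, hence
   can be neither [in] nor [undec], so it is [out]; and an argument all of whose
   attackers are [out] can be neither [out] nor [undec].  Induction on the
   construction of the grounded extension then puts all of it in [A]. *)

Section WeaklyCompleteLabeling.

Variables (F : Type) (att : F -> F -> Prop) (L : F -> label).
Hypothesis HL : weakly_complete_labeling att L.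

Lemma attacked_by_in_is_out (b c : F) : att c b -> L c = lin -> L b = lout.
Proof.
  intros Hcb Hc.
  destruct (HL b) as [Hin [_ Hundec]].
  destruct (L b) eqn:Eb.
  - exfalso. exact (Hin eq_refl c Hcb Hc).
  - reflexivity.
  - exfalso. exact (proj2 (Hundec eq_refl) c Hcb Hc).
Qed.

Lemma attackers_out_is_in (a : F) : (forall b, att b a -> L b = lout) -> L a = lin.
Proof.
  intros Hout.
  destruct (HL a) as [_ [Hlout Hundec]].
  destruct (L a) eqn:Ea.
  - reflexivity.
  - destruct (Hlout eq_refl) as [b [Hba Hb]].
    rewrite (Hout b Hba) in Hb. discriminate.
  - destruct (proj1 (Hundec eq_refl)) as [b [Hba Hb]].
    rewrite (Hout b Hba) in Hb. discriminate.
Qed.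

Lemma defended_by_in_is_in (a : F) :
  defends att (fun c => L c = lin) a -> L a = lin.
Proof.
  intros Hdef. apply attackers_out_is_in.
  intros b Hba. destruct (Hdef b Hba) as [c [Hc Hcb]].
  exact (attacked_by_in_is_out b c Hcb Hc).
Qed.

End WeaklyCompleteLabeling.

Lemma grounded_defends_ind (F : Type) (att : F -> F -> Prop) (P : F -> Prop) :
  (forall a, defends att (fun c => grounded att c /\ P c) a -> P a) ->
  forall a, grounded att a -> P a.
Proof.
  intros Hstep. fix IH 2. intros a [a' Ha'].
  apply Hstep. intros b Hba.
  destruct (Ha' b Hba) as [c [Gc Hcb]].
  exists c. split; [split; [exact Gc | exact (IH c Gc)] | exact Hcb].
Qed.

Theorem mainTheorem12 (F : Type) (att : F -> F -> Prop) (A : F -> Prop) :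
  weakly_complete att A -> forall a, grounded att a -> A a.
Proof.
  intros [L [HL HA]] a Ga.
  apply HA. revert a Ga.
  apply grounded_defends_ind. intros a Hdef.
  apply (defended_by_in_is_in F att L HL).
  intros b Hba. destruct (Hdef b Hba) as [c [[_ Hc] Hcb]].
  exists c. split; assumption.
Qed.
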